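(* Assume (A0), (A1), (A2) below. Then there is a positive constant $M$ such that $n_0^2\,|\Xi^3_i|\le M$ for all $i$ (and all $k$). (A0) For $i=1,\dots,k$, $\mathbf{X}_i=\{X_{i1},\dots,X_{in_i}\}$ is a random sample of size $n_i\ge2m$ from the distribution of a random element $X_i$ of a measurable space $(E,\mathcal{E})$, the samples independent. (A1) There is $M>0$ with $\mathbb{E}\{h^2(X_{i1},\dots,X_{im})\}<M$ for all $i$, $k$. (A2) $n_i=c_in_0$ with $n_0\ge2m$ and $1\le c_i\le C$ for a constant $C>0$.
   Context: $m\ge1$ is fixed and $h:E^m\to\mathbb{R}$ is a symmetric kernel; distributions and sample sizes may depend on $k$. Let $\theta_i=\mathbb{E}\{h(X_{i1},\dots,X_{im})\}$, and for $0\le c\le m$ let $h_{c}(x_1,\dots,x_c)=\mathbb{E}\{h(X_{i1},\dots,X_{im})\mid X_{i1}=x_1,\dots,X_{ic}=x_c\}$ (with $h_0=\theta_i$), $\widetilde{h}_c=h_c-\theta_i$, and $\widetilde{\zeta}^3_{i(c,j)}=\mathrm{Cov}\{\widetilde{h}_c(X_{i1},\dots,X_{ic}),\widetilde{h}_j(X_{i1},\dots,X_{ij})\widetilde{h}_{c-j}(X_{i(j+1)},\dots,X_{ic})\}$. Define $$\Xi^3_i=4\binom{n_i}{2m}^{-1}\binom{2m}{m}^{-1}\sum_{c=1}^m\binom{n_i-m}{2m-c}\binom{m}{c}\sum_{j=1}^c\binom{c}{j}\binom{2m-c}{m-j}\widetilde{\zeta}^3_{i(c,j)},$$ with $\binom{a}{b}=0$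 if $b>a$. *)

From HB Require Import structures.
From mathcomp Require Import all_boot all_order all_algebra perm.
From mathcomp Require Import all_classical all_reals all_analysis.
Set Implicit Arguments. Unset Strict Implicit. Unset Printing Implicit Defensive.
Import Order.TTheory GRing.Theory Num.Theory.
Local Open Scope classical_set_scope.
Local Open Scope ring_scope.

Definition symmetric_kernel (E : Type) (R : Type) (m : nat)
  (h : m.-tuple E -> R) : Prop :=
  forall (s : 'S_m) (t : m.-tuple E), h [tuple tnth t (s l) | l < m] = h t.

Definition mutually_independent (R : realType) (dO dE : measure_display)
  (O : measurableType dO) (E : measurableType dE) (P : probability O R)
  (I : eqType) (D : set I) (Y : I -> O -> E) : Prop :=
  forall (s : seq I) (A : I -> set E), uniq s -> (forall a, a \in s -> D a) ->
    (forall a, measurable (A a)) ->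
    P (\bigcap_(a in [set a | a \in s]) (Y a @^-1` A a)) =
    (\prod_(a <- s) P (Y a @^-1` A a))%E.

Section Ustat.
Variables (R : realType) (dO dE : measure_display).
Variables (O : measurableType dO) (E : measurableType dE) (P : probability O R).
Variables (m : nat) (h : m.-tuple E -> R).
(* Y l = X_{i,l+1} : the i-th sample (0-indexed) *)
Variable (Y : nat -> O -> E).

Definition theta : R := fine ('E_P[fun w => h [tuple Y l w | l < m]]).

(* h_c(x_1,...,x_c) = E h(x_1,...,x_c, X_{i(c+1)},...,X_{im})
   (x l stands for x_{l+1}; only x 0 .. x (c-1) are used) *)
Definition hcond (c : nat) (x : nat -> E) : R :=
  fine ('E_P[fun w => h [tuple (if (val l < c)%N then x (val l) else Y l w) | l < m]]).

Definition htil (c : nat) (x : nat -> E) : R := hcond c x - theta.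

Definition zeta3 (c j : nat) : R :=
  fine (covariance P
    (fun w => htil c (fun l => Y l w))
    (fun w => htil j (fun l => Y l w) * htil (c - j) (fun l => Y (j + l)%N w))).

Definition Xi3 (n : nat) : R :=
  4 / ('C(n, 2 * m)%:R * 'C(2 * m, m)%:R) *
  \sum_(1 <= c < m.+1)
     ('C(n - m, 2 * m - c)%:R * 'C(m, c)%:R *
      \sum_(1 <= j < c.+1) ('C(c, j)%:R * 'C(2 * m - c, m - j)%:R * zeta3 c j)).
End Ustat.

(* Each zeta is a covariance, hence bounded by half the sum of the second
   moments of its two arguments.  By Jensen's inequality the conditional
   kernels satisfy E (h_c - theta)^2 <= 4M.  The second argument is a product
   of two centred kernels evaluated on disjoint blocks of the i.i.d. sample,
   so its second moment factorises and is at most 16 M^2.  Hence all zetas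
   are bounded uniformly.  In Xi^3 the term c = 1 vanishes, because
   zeta_(1,1) involves h_0 - theta = 0; for c >= 2 the ratio
   n^2 C(n - m, 2m - c) / C(n, 2m) is bounded by a constant depending only on
   m, and n_0 <= n_i. *)

From HB Require Import structures.
From mathcomp Require Import all_boot all_order all_algebra perm.
From mathcomp Require Import all_classical all_reals all_analysis.
From mathcomp Require Import measurable_realfun lra ring zify.
Import Order.TTheory GRing.Theory Num.Theory.
Local Open Scope classical_set_scope.
Local Open Scope ring_scope.
Set Implicit Arguments. Unset Strict Implicit. Unset Printing Implicit Defensive.

Section SecondMoments.
Context (R : realType) (d : measure_display) (T : measurableType d).
Context (P : probability T R).

Lemma sqr_lty_Lfun2 (f : T -> R) : measurable_fun setT f ->
  (\int[P]_x ((f x) ^+ 2)%:E < +oo)%E -> f \in Lfun P 2%:E.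
Proof.
move=> mf fin; rewrite inE; apply/andP; split; first by rewrite inE.
rewrite inE /= /finite_norm unlock /Lnorm; apply: poweR_lty.
rewrite (eq_integral (fun x => ((f x) ^+ 2)%:E)) // => x _ /=.
by rewrite powR_mulrn // real_normK // num_real.
Qed.

Lemma sqr_integral_le (g : T -> R) : measurable_fun setT g ->
  (((fine (\int[P]_x (g x)%:E)) ^+ 2)%:E <= \int[P]_x ((g x) ^+ 2)%:E)%E.
Proof.
move=> mg.
have [fin|] := ltP (\int[P]_x ((g x) ^+ 2)%:E)%E +oo%E; last first.
  by rewrite leye_eq => /eqP ->; rewrite leey.
have g2 : g \in Lfun P 2%:E by exact: sqr_lty_Lfun2.
have gfin : ('E_P[g] \is a fin_num)%E.
  by apply: expectation_fin_num; apply: Lfun_subset12 g2; exact: fin_num_measure.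
have := variance_ge0 P g; rewrite varianceE // -(fineK gfin) sube_ge0 ?fin_numX //.
by rewrite !unlock.
Qed.

Lemma variance_le_sqr_integral (f : T -> R) : f \in Lfun P 2%:E ->
  ('V_P[f] <= \int[P]_x ((f x) ^+ 2)%:E)%E.
Proof.
move=> f2; rewrite varianceE //.
have f1 : f \in Lfun P 1 by apply: Lfun_subset12 f2; exact: fin_num_measure.
have Efin : ('E_P[f] \is a fin_num)%E by exact: expectation_fin_num.
have f2fin : (\int[P]_x ((f x) ^+ 2)%:E \is a fin_num)%E.
  exact: integrable_fin_num (Lfun2_integrable_sqr f2).
have -> : ('E_P[f ^+ 2] = \int[P]_x ((f x) ^+ 2)%:E)%E by rewrite unlock.
rewrite -(fineK Efin) -(fineK f2fin) -EFin_expe -EFinB.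
by rewrite lee_fin lerBlDr lerDl sqr_ge0.
Qed.

(* Both bounds come from [0 <= 'V_P[f \+ g]] and [0 <= 'V_P[f \- g]]. *)
Lemma abs_covariance_le (f g : T -> R) : f \in Lfun P 2%:E -> g \in Lfun P 2%:E ->
  `|fine (covariance P f g)| <= (fine 'V_P[f] + fine 'V_P[g]) / 2.
Proof.
move=> f2 g2.
have Pfin : (P setT \is a fin_num)%E by exact: fin_num_measure.
have cfin : (covariance P f g \is a fin_num)%E.
  apply: covariance_fin_num; last exact: Lfun2_mul_Lfun1.
  - exact: Lfun_subset12 f2.
  - exact: Lfun_subset12 g2.
have := variance_ge0 P (f \+ g); rewrite varianceD //.
have := variance_ge0 P (f \- g); rewrite varianceB //.
rewrite -(fineK cfin) -(fineK (variance_fin_num f2)) -(fineK (variance_fin_num g2)).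
rewrite -!EFinM -!EFinB -!EFinD !lee_fin => hB hD.
by rewrite ler_norml; apply/andP; split; lra.
Qed.

Lemma abs_covariance_le_sqr_integrals (f g : T -> R) (a b : R) :
  measurable_fun setT f -> measurable_fun setT g ->
  (\int[P]_x ((f x) ^+ 2)%:E <= a%:E)%E -> (\int[P]_x ((g x) ^+ 2)%:E <= b%:E)%E ->
  `|fine (covariance P f g)| <= (a + b) / 2.
Proof.
move=> mf mg fa gb.
have f2 : f \in Lfun P 2%:E by apply: sqr_lty_Lfun2 => //; exact: le_lt_trans fa (ltry _).
have g2 : g \in Lfun P 2%:E by apply: sqr_lty_Lfun2 => //; exact: le_lt_trans gb (ltry _).
have Vle (k : T -> R) c : k \in Lfun P 2%:E ->
    (\int[P]_x ((k x) ^+ 2)%:E <= c%:E)%E -> fine 'V_P[k] <= c.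
  move=> k2 kc; rewrite -lee_fin (fineK (variance_fin_num k2)).
  exact: le_trans (variance_le_sqr_integral k2) kc.
apply: le_trans (abs_covariance_le f2 g2) _.
by rewrite ler_pM2r // lerD // Vle.
Qed.

Lemma integral_sqr_centered_le (f : T -> R) (t a : R) : measurable_fun setT f ->
  (\int[P]_x ((f x) ^+ 2)%:E <= a%:E)%E -> t ^+ 2 <= a ->
  (\int[P]_x ((f x - t) ^+ 2)%:E <= (4 * a)%:E)%E.
Proof.
move=> mf fa ta.
have mf2 : measurable_fun setT (fun x => (2 * f x ^+ 2)%:E).
  by apply/measurable_EFinP; apply: measurable_funM => //; exact: measurable_funX.
apply: (@le_trans _ _ (\int[P]_x ((2 * f x ^+ 2)%:E + (2 * t ^+ 2)%:E))%E).
  apply: ge0_le_integral => //.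
  - by move=> x _; rewrite lee_fin sqr_ge0.
  - by apply/measurable_EFinP; apply: measurable_funX; exact: measurable_funB.
  - by apply: emeasurable_funD.
  - move=> x _; rewrite -EFinD lee_fin.
    by have := sqr_ge0 (f x + t); rewrite !expr2; nra.
rewrite ge0_integralD //; first last.
- by move=> x _; rewrite lee_fin mulr_ge0 // sqr_ge0.
- by move=> x _; rewrite lee_fin mulr_ge0 // sqr_ge0.
rewrite integral_cst //= probability_setT mule1.
under eq_integral do rewrite EFinM.
rewrite ge0_integralZl_EFin //; last 2 first.
- by move=> x _; rewrite lee_fin sqr_ge0.
- by apply/measurable_EFinP; exact: measurable_funX.
rewrite (_ : (4 * a)%:E = (2 * a)%:E + (2 * a)%:E)%E; last first.
  by rewrite -EFinD; congr EFin; ring.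
apply: leeD; last by rewrite lee_fin ler_pM2l.
by rewrite EFinM; apply: lee_wpmul2l.
Qed.

End SecondMoments.

Section Boxes.
Context (d : measure_display) (E : measurableType d).

Lemma measurable_nth r i : measurable_fun setT (fun u : r.-tuple E => nth point u i).
Proof.
case: (ltnP i r) => ir.
  rewrite (_ : (fun u : r.-tuple E => _) = fun u => tnth u (Ordinal ir)).
    exact: measurable_tnth.
  by apply/funext => u; rewrite (tnth_nth point).
rewrite (_ : (fun u : r.-tuple E => _) = cst point); first exact: measurable_cst.
by apply/funext => u; rewrite nth_default // size_tuple.
Qed.

Definition box r (A : nat -> set E) : set (r.-tuple E) :=
  [set u | forall i : 'I_r, A i (tnth u i)].
Arguments box : clear implicits.

Definition boxes r : set (set (r.-tuple E)) :=
  [set S | exists2 A : nat -> set E, (forall l, measurable (A l)) & S = box r A].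
Arguments boxes : clear implicits.

Lemma measurable_box r A : (forall l, measurable (A l)) -> measurable (box r A).
Proof.
move=> mA.
have -> : box r A = \bigcap_(i in [set: 'I_r]) ((fun u : r.-tuple E => tnth u i) @^-1` A i).
  by apply/seteqP; split => u /= Au i; [move=> _|]; exact: Au.
apply: fin_bigcap_measurable; first exact: finite_finset.
by move=> i _; rewrite -[X in measurable X]setTI; exact: measurable_tnth.
Qed.

Lemma boxesT r : boxes r setT.
Proof. by exists (fun _ => setT) => //; apply/seteqP; split. Qed.

Lemma boxesI r : setI_closed (boxes r).
Proof.
move=> _ _ [A mA ->] [B mB ->]; exists (fun l => A l `&` B l).
  by move=> l; exact: measurableI.
by apply/seteqP; split => u /=; [move=> [AB] i; split | move=> AB; split => i; case: (AB i)].
Qed.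

Lemma boxes_generate r : @measurable _ (r.-tuple E) = <<s boxes r >>.
Proof.
apply/seteqP; split; last first.
  apply: smallest_sub; first exact: sigma_algebra_measurable.
  by move=> _ [A mA ->]; exact: measurable_box.
apply: smallest_sub; first exact: smallest_sigma_algebra.
case: r => [|r]; first by rewrite big_ord0.
rewrite -bigcup_mkord_ord => S [i /= ir [B mB <-]].
apply: sub_sigma_algebra; exists (fun l => if l == i then B else setT).
  by move=> l; case: eqP.
apply/seteqP; split => u /=.
  move=> [_ Bu] j; case: eqP => // ji.
  by have -> : j = inord i by apply/val_inj; rewrite /= inordK // ji.
by move=> Au; split => //; have := Au (inord i); rewrite inordK // eqxx.
Qed.

Lemma box_pairs_generate r q : @measurable _ (r.-tuple E * q.-tuple E)%type =
  <<s [set S `*` T | S in boxes r & T in boxes q] >>.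
Proof.
set G := [set S `*` T | S in boxes r & T in boxes q].
rewrite measurable_prod_measurableType.
apply/seteqP; split; last first.
  apply: smallest_sub; first exact: smallest_sigma_algebra.
  move=> _ [S GS [T GT <-]]; apply: sub_sigma_algebra; exists S.
    by rewrite boxes_generate; exact: sub_sigma_algebra.
  by exists T => //; rewrite boxes_generate; exact: sub_sigma_algebra.
apply: smallest_sub; first exact: smallest_sigma_algebra.
have fstG : <<s boxes r >> `<=` image_set_system setT fst <<s G >>.
  apply: smallest_sub; first by apply: sigma_algebra_image; exact: smallest_sigma_algebra.
  move=> S GS; apply: sub_sigma_algebra; exists S => //; exists setT; first exact: boxesT.
  by apply/seteqP; split => -[u v] /=; [move=> [] | move=> [] _].
have sndG : <<s boxes q >> `<=` image_set_system setT snd <<s G >>.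
  apply: smallest_sub; first by apply: sigma_algebra_image; exact: smallest_sigma_algebra.
  by move=> T GT; apply: sub_sigma_algebra; exists setT; [exact: boxesT | exists T].
move=> _ [S mS [T mT <-]].
rewrite boxes_generate in mS; rewrite boxes_generate in mT.
have GS := fstG _ mS; have GT := sndG _ mT.
rewrite /image_set_system /= in GS GT.
have -> : S `*` T = ([set: r.-tuple E * q.-tuple E] `&` fst @^-1` S) `&`
                    ([set: r.-tuple E * q.-tuple E] `&` snd @^-1` T).
  by apply/seteqP; split => -[u v] /=; [move=> [] | move=> [[_ ?] [_ ?]]].
exact: (@measurableI _ (g_sigma_algebraType G) _ _ GS GT).
Qed.

End Boxes.
Arguments box {d E} r A.
Arguments boxes {d E} r.

Section IidBlocks.
Context (R : realType) (dO dE : measure_display) (O : measurableType dO)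
  (E : measurableType dE) (P : probability O R) (mu : probability E R)
  (Y : nat -> O -> E) (n : nat).
Hypothesis mY : forall l, (l < n)%N -> measurable_fun setT (Y l).
Hypothesis lawY : forall l A, (l < n)%N -> measurable A -> P (Y l @^-1` A) = mu A.
Hypothesis indY : mutually_independent P [set l | (l < n)%N] Y.

(* Padding the sample with a constant beyond [n] makes every block measurable;
   blocks are only ever used inside [0, n) (see [blockE]). *)
Definition padded l : O -> E := if (l < n)%N then Y l else cst point.

Definition block a r (w : O) : r.-tuple E := [tuple padded (a + l) w | l < r].
Arguments block : clear implicits.

Lemma blockE a r w : (a + r <= n)%N -> block a r w = [tuple Y (a + l) w | l < r].
Proof.
move=> arn; apply: eq_mktuple => l; rewrite /padded.
by have -> : (a + l < n)%N by apply: leq_trans arn; rewrite ltn_add2l.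
Qed.

Lemma measurable_block a r : measurable_fun setT (block a r).
Proof.
apply/measurable_fun_tnthP => i.
rewrite (_ : _ \o _ = padded (a + i)); last by apply/funext => w /=; rewrite tnth_mktuple.
by rewrite /padded; case: ifP => [/mY //|_]; exact: measurable_cst.
Qed.

Definition law r : probability (r.-tuple E) R :=
  distribution P (mfun_Sub (mem_set (@measurable_block 0 r))).
Arguments law : clear implicits.

Lemma prob_block_box a r A : (a + r <= n)%N -> (forall l, measurable (A l)) ->
  P (block a r @^-1` box r A) = (\prod_(i < r) mu (A i))%E.
Proof.
move=> arn mA.
have -> : block a r @^-1` box r A =
    \bigcap_(l in [set l | l \in iota a r]) (Y l @^-1` A (l - a)%N).
  apply/seteqP; split => w /=; rewrite blockE //.
  - move=> Aw l; rewrite /mkset mem_iota => /andP[al lar].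
    have lr : (l - a < r)%N by rewrite ltn_subLR.
    by have := Aw (Ordinal lr); rewrite tnth_mktuple /= subnKC.
  - move=> Aw i; rewrite tnth_mktuple; have := Aw (a + i)%N.
    by rewrite /= /mkset mem_iota leq_addr ltn_add2l ltn_ord addKn; apply.
rewrite indY ?iota_uniq //; last first.
  by move=> l; rewrite mem_iota /= => /andP[_ /leq_trans]; apply.
rewrite -[a in iota a r]addn0 iotaDl big_map.
have -> : iota 0 r = index_iota 0 r by rewrite /index_iota subn0.
rewrite big_mkord; apply: eq_bigr => i _.
by rewrite addKn lawY //; apply: leq_trans arn; rewrite ltn_add2l.
Qed.

Lemma prob_block_box2 a r q A B : (a + r + q <= n)%N ->
  (forall l, measurable (A l)) -> (forall l, measurable (B l)) ->
  P (block a r @^-1` box r A `&` block (a + r) q @^-1` box q B) =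
  ((\prod_(i < r) mu (A i)) * \prod_(i < q) mu (B i))%E.
Proof.
move=> arqn mA mB.
pose C l := if (l < r)%N then A l else B (l - r)%N.
have -> : block a r @^-1` box r A `&` block (a + r) q @^-1` box q B =
    block a (r + q) @^-1` box (r + q) C.
  apply/seteqP; split => w /=.
  - move=> [Aw Bw] i; rewrite tnth_mktuple /C.
    case: (splitP i) => j ->; first by have := Aw j; rewrite tnth_mktuple.
    by have := Bw j; rewrite tnth_mktuple addKn addnA.
  - move=> Cw; split => j; rewrite tnth_mktuple.
      by have := Cw (lshift q j); rewrite tnth_mktuple /C /= ltn_ord.
    by have := Cw (rshift r j); rewrite tnth_mktuple /C /= ltnNge leq_addr addKn addnA.
rewrite prob_block_box ?addnA //; last by move=> l; rewrite /C; case: ifP.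
rewrite big_split_ord /C; congr (_ * _)%E; apply: eq_bigr => i _ /=.
  by rewrite ltn_ord.
by rewrite ltnNge leq_addr addKn.
Qed.

Lemma integral_block_pair a r q (F : r.-tuple E * q.-tuple E -> \bar R) :
  (a + r + q <= n)%N -> measurable_fun setT F -> (forall z, 0 <= F z)%E ->
  (\int[P]_w F (block a r w, block (a + r) q w) = \int[law r]_u \int[law q]_v F (u, v))%E.
Proof.
move=> arqn mF F0.
have mpair : measurable_fun setT (fun w => (block a r w, block (a + r) q w)).
  exact: measurable_fun_pair (@measurable_block a r) (@measurable_block (a + r) q).
pose joint := distribution P (mfun_Sub (mem_set mpair)).
(* Both measures give products of boxes the same mass by independence, and
   these products generate the product sigma-algebra. *)
have jointE S : measurable S -> joint S = (law r \x law q)%E S.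
  move=> mS; apply: (measure_unique _ (fun _ => setT) (box_pairs_generate E r q)) => //.
  - move=> _ _ [S1 GS1 [T1 GT1 <-]] [S2 GS2 [T2 GT2 <-]]; rewrite -setXI.
    by exists (S1 `&` S2); [exact: boxesI | exists (T1 `&` T2) => //; exact: boxesI].
  - by move=> _; exists setT; [exact: boxesT | exists setT; [exact: boxesT | rewrite setXTT]].
  - by apply/seteqP; split => z //= _; exists 0%N.
  - move=> _ [_ [A mA ->] [_ [B mB ->] <-]].
    transitivity (law r (box r A) * law q (box q B))%E; last first.
      by apply/esym/product_measure1E; exact: measurable_box.
    have -> : law r (box r A) = (\prod_(i < r) mu (A i))%E.
      by apply: (@prob_block_box 0 r A) => //; lia.
    have -> : law q (box q B) = (\prod_(i < q) mu (B i))%E.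
      by apply: (@prob_block_box 0 q B) => //; lia.
    exact: prob_block_box2.
  - by move=> _; have /= -> := probability_setT joint; exact: ltry.
transitivity (\int[joint]_z F z)%E; first by rewrite ge0_integral_distribution.
rewrite (eq_measure_integral (law r \x law q)%E); last by move=> S mS _; exact: jointE.
exact: fubini_tonelli1.
Qed.

Lemma integral_block a r (F : r.-tuple E -> \bar R) :
  (a + r <= n)%N -> measurable_fun setT F -> (forall u, 0 <= F u)%E ->
  (\int[P]_w F (block a r w) = \int[law r]_u F u)%E.
Proof.
move=> arn mF F0.
have := @integral_block_pair a r 0 (fun z => F z.1).
rewrite addn0 => /(_ arn (measurableT_comp mF measurable_fst) (fun z => F0 _)) /= ->.
apply: eq_integral => u _; rewrite integral_cst //=.
by have /= -> := probability_setT (law 0); rewrite mule1.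
Qed.

Lemma integral_block_EFin a r (g : r.-tuple E -> R) :
  (a + r <= n)%N -> measurable_fun setT g ->
  (\int[P]_w (g (block a r w))%:E = \int[law r]_u (g u)%:E)%E.
Proof.
move=> arn mg; have mgE : measurable_fun setT (EFin \o g) by exact/measurable_EFinP.
rewrite integralE [RHS]integralE.
rewrite -(integral_block arn (measurable_funepos mgE) (funepos_ge0 _)).
rewrite -(integral_block arn (measurable_funeneg mgE) (funeneg_ge0 _)).
by congr (_ - _)%E; apply: eq_integral => w _; rewrite ?funeposE ?funenegE.
Qed.

Lemma integral_block_mul a r q (f : r.-tuple E -> R) (g : q.-tuple E -> R) :
  (a + r + q <= n)%N -> measurable_fun setT f -> measurable_fun setT g ->
  (forall u, 0 <= f u) -> (forall v, 0 <= g v) ->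
  (\int[P]_w (f (block a r w) * g (block (a + r) q w))%:E =
   \int[P]_w (f (block a r w))%:E * \int[P]_w (g (block (a + r) q w))%:E)%E.
Proof.
move=> arqn mf mg f0 g0.
have mfE : measurable_fun setT (EFin \o f) by exact/measurable_EFinP.
have mgE : measurable_fun setT (EFin \o g) by exact/measurable_EFinP.
rewrite (@integral_block_pair a r q (fun z => (f z.1 * g z.2)%:E)) //; first last.
- by move=> z; rewrite lee_fin mulr_ge0.
- by apply/measurable_EFinP; apply: measurable_funM;
    [exact: measurableT_comp mf measurable_fst | exact: measurableT_comp mg measurable_snd].
rewrite (@integral_block a r (EFin \o f)) //; last lia.
rewrite (@integral_block (a + r) q (EFin \o g)) //=.
have inner u : (\int[law q]_v (f u * g v)%:E = (f u)%:E * \int[law q]_v (g v)%:E)%E.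
  under eq_integral do rewrite EFinM.
  by rewrite ge0_integralZl_EFin // => v _; rewrite lee_fin.
under eq_integral do rewrite inner.
rewrite ge0_integralZr // => [u _|]; first by rewrite lee_fin.
by apply: integral_ge0 => v _; rewrite lee_fin.
Qed.

Context (m : nat) (h : m.-tuple E -> R) (M : R).
Hypothesis mh : measurable_fun setT h.
Hypothesis mn : (m <= n)%N.
Hypothesis hM : ('E_P[fun w => ((h [tuple Y l w | l < m]) ^+ 2)%R] < M%:E)%E.

Definition splice c (u : c.-tuple E) (v : (m - c).-tuple E) : m.-tuple E :=
  [tuple if (l < c)%N then nth point u l else nth point v (l - c) | l < m].

Lemma measurable_splice c :
  measurable_fun setT (fun z : c.-tuple E * (m - c).-tuple E => splice z.1 z.2).
Proof.
apply/measurable_fun_tnthP => i.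
rewrite (_ : _ \o _ = fun z : c.-tuple E * (m - c).-tuple E =>
   if (i < c)%N then nth point z.1 i else nth point z.2 (i - c)); last first.
  by apply/funext => z /=; rewrite tnth_mktuple.
case: (i < c)%N.
  exact: measurableT_comp (@measurable_nth _ _ c i) measurable_fst.
exact: measurableT_comp (@measurable_nth _ _ (m - c) (i - c)) measurable_snd.
Qed.

Lemma measurable_splice_right c (u : c.-tuple E) : measurable_fun setT (splice u).
Proof. exact: measurable_fun_pair2 u (@measurable_splice c). Qed.

Lemma splice_block c (x : nat -> E) w : (c <= m)%N ->
  splice [tuple x l | l < c] (block c (m - c) w) =
  [tuple if (l < c)%N then x l else Y l w | l < m].
Proof.
move=> cm; rewrite blockE ?subnKC //; apply: eq_mktuple => l.
case: ifP => lc; first by rewrite (nth_mktuple _ _ (Ordinal lc)).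
have lc' : (l - c < m - c)%N by have := ltn_ord l; move/negbT: lc; rewrite -leqNgt; lia.
by rewrite (nth_mktuple _ _ (Ordinal lc')) /= subnKC // leqNgt lc.
Qed.

(* [hpart c u] is [h_c] at the point [u]: the last [m - c] arguments of [h]
   are integrated out against their joint law. *)
Definition hpart c (u : c.-tuple E) : R :=
  fine (\int[law (m - c)]_v (h (splice u v))%:E)%E.

Lemma measurable_hpart c : measurable_fun setT (@hpart c).
Proof.
pose g := fun z : c.-tuple E * (m - c).-tuple E => (h (splice z.1 z.2))%:E.
have mg : measurable_fun setT g.
  by apply/measurable_EFinP; exact: measurableT_comp mh (@measurable_splice c).
rewrite (_ : @hpart c = fun u =>
    fine (fubini_F (law (m - c)) g^\+ u - fubini_F (law (m - c)) g^\- u)%E).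
  apply: measurableT_comp; first exact: fine_measurable.
  by apply: emeasurable_funB; apply: measurable_fun_fubini_tonelli_F;
    [exact: measurable_funepos | exact: funepos_ge0 | exact: measurable_funeneg
    | exact: funeneg_ge0].
apply/funext => u; rewrite /hpart integralE /fubini_F.
by congr (fine (_ - _))%E; apply: eq_integral => v _; rewrite ?funeposE ?funenegE.
Qed.

Lemma hcondE c x : (c <= m)%N -> hcond P h Y c x = hpart [tuple x l | l < c].
Proof.
move=> cm; rewrite /hcond /hpart unlock; congr fine.
rewrite -(@integral_block_EFin c (m - c) (fun v => h (splice [tuple x l | l < c] v))).
- by apply: eq_integral => w _; rewrite splice_block.
- by rewrite subnKC.
- exact: measurableT_comp mh (measurable_splice_right _).
Qed.

Lemma htilE c x : (c <= m)%N ->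
  htil P h Y c x = hpart [tuple x l | l < c] - theta P h Y.
Proof. by move=> cm; rewrite /htil hcondE. Qed.

Lemma theta_sqr_le : theta P h Y ^+ 2 <= M.
Proof.
have mhY : measurable_fun setT (fun w => h [tuple Y l w | l < m]).
  have -> : (fun w => h [tuple Y l w | l < m]) = h \o block 0 m.
    by apply/funext => w /=; rewrite blockE.
  exact: measurableT_comp mh (@measurable_block 0 m).
rewrite -lee_fin /theta unlock; apply: le_trans (sqr_integral_le P mhY) _.
by apply: ltW; move: hM; rewrite unlock.
Qed.

Lemma integral_hpart_sqr_le c a : (c <= m)%N -> (a + c <= n)%N ->
  (\int[P]_w ((hpart (block a c w)) ^+ 2)%:E <= M%:E)%E.
Proof.
move=> cm acn.
pose g := fun z : c.-tuple E * (m - c).-tuple E => ((h (splice z.1 z.2)) ^+ 2)%:E.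
have mg : measurable_fun setT g.
  apply/measurable_EFinP; apply: measurable_funX.
  exact: measurableT_comp mh (@measurable_splice c).
have mhpart2 : measurable_fun setT (fun u => ((@hpart c u) ^+ 2)%:E).
  by apply/measurable_EFinP; apply: measurable_funX; exact: measurable_hpart.
rewrite (@integral_block a c (fun u => ((hpart u) ^+ 2)%:E)) //; last first.
  by move=> u; rewrite lee_fin sqr_ge0.
apply: (@le_trans _ _ (\int[law c]_u fubini_F (law (m - c)) g u)%E).
  apply: ge0_le_integral => //.
  - by move=> u _; rewrite lee_fin sqr_ge0.
  - by apply: measurable_fun_fubini_tonelli_F => // z; rewrite lee_fin sqr_ge0.
  - move=> u _; apply: sqr_integral_le.
    exact: measurableT_comp mh (measurable_splice_right _).
rewrite /fubini_F -(@integral_block_pair 0 c (m - c) g) //; first last.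
- by move=> z; rewrite lee_fin sqr_ge0.
- by rewrite add0n subnKC.
apply: ltW; move: hM; rewrite unlock; apply: le_lt_trans.
rewrite le_eqVlt; apply/orP; left; apply/eqP; apply: eq_integral => w _.
have -> : block 0 c w = [tuple Y l w | l < c] by rewrite blockE //; lia.
rewrite /g /= add0n (splice_block (fun l => Y l w)) //.
by congr ((h _ ^+ 2)%:E); apply: eq_mktuple => l; case: ifP.
Qed.

Lemma integral_centered_sqr_le c a : (c <= m)%N -> (a + c <= n)%N ->
  (\int[P]_w ((hpart (block a c w) - theta P h Y) ^+ 2)%:E <= (4 * M)%:E)%E.
Proof.
move=> cm acn; apply: integral_sqr_centered_le theta_sqr_le.
  exact: measurableT_comp (@measurable_hpart c) (@measurable_block a c).
exact: integral_hpart_sqr_le.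
Qed.

Lemma abs_zeta3_le c j : (j <= c)%N -> (c <= m)%N ->
  `|zeta3 P h Y c j| <= (4 * M + 16 * M ^+ 2) / 2.
Proof.
move=> jc cm.
pose f (k a : nat) (w : O) := @hpart k (block a k w) - theta P h Y.
have mf k a : measurable_fun setT (f k a).
  apply: measurable_funB => //.
  exact: measurableT_comp (@measurable_hpart k) (@measurable_block a k).
have htil_block k a w : (a + k <= m)%N ->
    htil P h Y k (fun l => Y (a + l)%N w) = f k a w.
  by move=> akm; rewrite htilE /f ?blockE //; lia.
rewrite /zeta3.
have -> : (fun w => htil P h Y c (fun l => Y l w)) = f c 0.
  by apply/funext => w; rewrite -htil_block.
have -> : (fun w => htil P h Y j (fun l => Y l w) *
    htil P h Y (c - j) (fun l => Y (j + l)%N w)) = f j 0 \* f (c - j)%N j.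
  by apply/funext => w; rewrite /= -!htil_block //; lia.
apply: abs_covariance_le_sqr_integrals; [exact: mf | exact: measurable_funM | |].
  by apply: integral_centered_sqr_le; lia.
under eq_integral do rewrite /= exprMn.
rewrite (@integral_block_mul 0 j (c - j) (fun u => (hpart u - theta P h Y) ^+ 2)
  (fun v => (hpart v - theta P h Y) ^+ 2)) //; first last.
- by move=> v; exact: sqr_ge0.
- by move=> u; exact: sqr_ge0.
- apply: measurable_funX; apply: measurable_funB => //; exact: measurable_hpart.
- apply: measurable_funX; apply: measurable_funB => //; exact: measurable_hpart.
- lia.
rewrite (_ : 16 * M ^+ 2 = 4 * M * (4 * M)); last by ring.
rewrite EFinM; apply: lee_pmul; try apply: integral_ge0 => w _; rewrite ?lee_fin ?sqr_ge0 //.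
  by apply: integral_centered_sqr_le; lia.
by apply: integral_centered_sqr_le; lia.
Qed.

End IidBlocks.

Lemma mutually_independent_row (R : realType) (dO dE : measure_display)
    (O : measurableType dO) (E : measurableType dE) (P : probability O R)
    (I J : eqType) (D : set (I * J)) (Z : I * J -> O -> E) (i : I) :
  mutually_independent P D Z ->
  mutually_independent P [set j | D (i, j)] (fun j => Z (i, j)).
Proof.
move=> indZ s A us sD mA.
have := indZ [seq (i, j) | j <- s] (fun ij => A ij.2).
rewrite big_map map_inj_uniq; last by move=> j j' [].
move=> /(_ us) <- //; last by move=> _ /mapP[j js ->]; exact: sD.
congr (P _); apply/seteqP; split => w /= Aw.
  by move=> _ /mapP[j js ->]; exact: Aw.
by move=> j js; exact: (Aw (i, j) (map_f _ js)).
Qed.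

Section ZetaDiag.
Context (R : realType) (dO dE : measure_display) (O : measurableType dO)
  (E : measurableType dE) (P : probability O R) (m : nat) (h : m.-tuple E -> R)
  (Y : nat -> O -> E).

Lemma htil0 x : htil P h Y 0 x = 0.
Proof. by rewrite /htil; apply/eqP; rewrite subr_eq0. Qed.

Lemma zeta3_diag c : zeta3 P h Y c c = 0.
Proof.
rewrite /zeta3 subnn.
under [X in covariance P _ X]funext do rewrite htil0 mulr0.
by rewrite covariance_cst_r.
Qed.

End ZetaDiag.

Section BinomialBounds.
Context (n K : nat).
Hypothesis Kn : (K <= n)%N.

Lemma mul_bin_le_sqr_succ k : (k < K)%N -> (n * 'C(n, k) <= K ^ 2 * 'C(n, k.+1))%N.
Proof.
move=> kK; apply: (@leq_trans (K * ((n - k) * 'C(n, k)))).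
  by rewrite mulnA leq_mul2r; apply/orP; right; nia.
by rewrite -mul_bin_left expnS expn1 -mulnA leq_mul2l leq_mul2r kK !orbT.
Qed.

Lemma bin_le_mul_bin_succ k : (k < K)%N -> ('C(n, k) <= K * 'C(n, k.+1))%N.
Proof.
move=> kK; apply: (@leq_trans ((n - k) * 'C(n, k))).
  by rewrite leq_pmull // subn_gt0; exact: leq_trans kK Kn.
by rewrite -mul_bin_left leq_mul2r kK orbT.
Qed.

Lemma bin_le_bin_top k : (k <= K)%N -> ('C(n, k) <= K ^ (K - k) * 'C(n, K))%N.
Proof.
move: {2}(K - k)%N (erefl (K - k)%N) => t; elim: t k => [|t IH] k Kk kK.
  have -> : k = K by lia.
  by rewrite subnn mul1n.
apply: leq_trans (bin_le_mul_bin_succ _) _; first lia.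
rewrite Kk expnS -mulnA leq_mul2l -[t](_ : K - k.+1 = t)%N; last by lia.
by rewrite IH ?orbT //; lia.
Qed.

Lemma sqr_mul_bin_le k : (k.+2 <= K)%N ->
  (n ^ 2 * 'C(n, k) <= K ^ (K + 2) * 'C(n, K))%N.
Proof.
move=> kK; apply: (@leq_trans (n * (K ^ 2 * 'C(n, k.+1)))).
  by rewrite expnS expn1 -mulnA leq_mul2l mul_bin_le_sqr_succ ?orbT //; lia.
apply: (@leq_trans (K ^ 2 * (K ^ 2 * (K ^ (K - k.+2) * 'C(n, K))))).
  rewrite mulnCA leq_mul2l; apply/orP; right.
  apply: leq_trans (mul_bin_le_sqr_succ _) _; first lia.
  by rewrite leq_mul2l bin_le_bin_top ?orbT //; lia.
by rewrite (mulnA (K ^ 2)%N) -expnD mulnA -expnD leq_mul2r leq_pexp2l ?orbT //; lia.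
Qed.

End BinomialBounds.

Section Xi3Bound.
Context (R : realType) (dO dE : measure_display) (O : measurableType dO)
  (E : measurableType dE) (P : probability O R) (m : nat) (h : m.-tuple E -> R)
  (Y : nat -> O -> E) (Z : R).
Hypothesis zetaZ : forall c j, (j <= c)%N -> (c <= m)%N -> `|zeta3 P h Y c j| <= Z.

Definition Xi3_weight : R := \sum_(1 <= c < m.+1)
  ('C(m, c)%:R * \sum_(1 <= j < c.+1) ('C(c, j)%:R * 'C(2 * m - c, m - j)%:R)).

Lemma Xi3_weight_ge0 : 0 <= Xi3_weight.
Proof. by apply: sumr_ge0 => c _; rewrite mulr_ge0 // sumr_ge0. Qed.

Lemma Xi3_term_le nn n0 c : (2 * m <= nn)%N -> (n0 <= nn)%N -> (1 <= c <= m)%N ->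
  n0%:R ^+ 2 * `|'C(nn - m, 2 * m - c)%:R * 'C(m, c)%:R *
    \sum_(1 <= j < c.+1) ('C(c, j)%:R * 'C(2 * m - c, m - j)%:R * zeta3 P h Y c j)|
  <= ((2 * m) ^ (2 * m + 2) * 'C(nn, 2 * m))%:R * Z *
     ('C(m, c)%:R * \sum_(1 <= j < c.+1) ('C(c, j)%:R * 'C(2 * m - c, m - j)%:R)).
Proof.
move=> mnn n0nn /andP[c1 cm].
have Z0 : 0 <= Z by apply: le_trans (zetaZ (leqnn 0) (leq0n m)).
have [->|c_neq1] := eqVneq c 1%N.
  rewrite big_nat1 zeta3_diag !mulr0 normr0 mulr0.
  by rewrite !mulr_ge0 // sumr_ge0.
have zsum : `|\sum_(1 <= j < c.+1) ('C(c, j)%:R * 'C(2 * m - c, m - j)%:R * zeta3 P h Y c j)|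
    <= (\sum_(1 <= j < c.+1) ('C(c, j)%:R * 'C(2 * m - c, m - j)%:R)) * Z.
  apply: le_trans (ler_norm_sum _ _ _) _; rewrite mulr_suml.
  apply: ler_sum_nat => j /andP[_ jc]; rewrite normrM ger0_norm ?ler_wpM2l //.
  exact: zetaZ.
have binK : (n0 ^ 2 * 'C(nn - m, 2 * m - c) <= (2 * m) ^ (2 * m + 2) * 'C(nn, 2 * m))%N.
  apply: leq_trans (@sqr_mul_bin_le _ _ mnn (2 * m - c) _); last lia.
  by apply: leq_mul; [rewrite leq_exp2r | apply: leq_bin2l; exact: leq_subr].
move: zsum binK; set S := \sum_(1 <= j < c.+1) (_ * zeta3 P h Y c j).
set W := \sum_(1 <= j < c.+1) _; set a := 'C(nn - m, 2 * m - c); set b := 'C(m, c).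
set K := ((2 * m) ^ (2 * m + 2) * _)%N => zsum binK.
rewrite normrM (ger0_norm (_ : 0 <= a%:R * b%:R)) ?mulr_ge0 //.
rewrite (_ : _ * (_ * `|S|) = (n0%:R ^+ 2 * a%:R) * (b%:R * `|S|)); last by ring.
rewrite (_ : K%:R * Z * (b%:R * W) = K%:R * (b%:R * (W * Z))); last by ring.
apply: ler_pM; rewrite ?mulr_ge0 ?ler_wpM2l //.
by rewrite -natrX -natrM ler_nat.
Qed.

Lemma Xi3_le nn n0 : (2 * m <= nn)%N -> (n0 <= nn)%N ->
  n0%:R ^+ 2 * `|Xi3 P h Y nn| <= 4 * ((2 * m) ^ (2 * m + 2))%:R * Z * Xi3_weight.
Proof.
move=> mnn n0nn.
set K := ((2 * m) ^ (2 * m + 2))%N; set Cn := 'C(nn, 2 * m); set Cm := 'C(2 * m, m).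
have Cn0 : 0 < Cn%:R :> R by rewrite ltr0n bin_gt0.
have Cm1 : 1 <= Cm%:R :> R by rewrite ler1n bin_gt0 leq_pmull.
have Z0 : 0 <= Z by apply: le_trans (zetaZ (leqnn 0) (leq0n m)).
have sum_le : n0%:R ^+ 2 * `|\sum_(1 <= c < m.+1) ('C(nn - m, 2 * m - c)%:R * 'C(m, c)%:R *
    \sum_(1 <= j < c.+1) ('C(c, j)%:R * 'C(2 * m - c, m - j)%:R * zeta3 P h Y c j))|
    <= (K * Cn)%:R * Z * Xi3_weight.
  apply: le_trans (ler_wpM2l (sqr_ge0 _) (ler_norm_sum _ _ _)) _.
  rewrite mulr_sumr /Xi3_weight mulr_sumr; apply: ler_sum_nat => c hc.
  exact: Xi3_term_le.
rewrite /Xi3 normrM ger0_norm ?divr_ge0 ?mulr_ge0 // mulrCA.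
apply: le_trans (ler_wpM2l _ sum_le) _; first by rewrite divr_ge0 ?mulr_ge0.
rewrite natrM -/Cn -/Cm (_ : 4 / _ * _ = 4 * K%:R * Z * Xi3_weight / Cm%:R); last first.
  by field; apply/andP; split; apply: lt0r_neq0; lra.
rewrite ler_pdivrMr; last lra.
by rewrite ler_peMr // !mulr_ge0 // Xi3_weight_ge0.
Qed.

End Xi3Bound.

Theorem lemma8 (R : realType) (dE : measure_display) (E : measurableType dE)
  (m : nat) (h : m.-tuple E -> R) (M C : R) :
  (1 <= m)%N -> measurable_fun setT h -> symmetric_kernel h ->
  0 < M -> 0 < C ->
  exists M' : R, 0 < M' /\
  forall (k : nat) (dO : measure_display) (O : measurableType dO)
    (P : probability O R) (mu : 'I_k -> probability E R)
    (X : 'I_k -> nat -> O -> E) (n : 'I_k -> nat) (n0 : nat) (c : 'I_k -> R),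
    (* (A0) *)
    (forall i, (2 * m <= n i)%N) ->
    (forall i j, (j < n i)%N -> measurable_fun setT (X i j)) ->
    (forall i j A, (j < n i)%N -> measurable A -> P (X i j @^-1` A) = mu i A) ->
    mutually_independent P [set ij | (ij.2 < n ij.1)%N] (fun ij => X ij.1 ij.2) ->
    (* (A1) *)
    (forall i, ('E_P[fun w => ((h [tuple X i l w | l < m]) ^+ 2)%R] < M%:E)%E) ->
    (* (A2) *)
    (2 * m <= n0)%N ->
    (forall i, (n i)%:R = c i * n0%:R /\ 1 <= c i <= C) ->
    forall i : 'I_k, n0%:R ^+ 2 * `|Xi3 P h (X i) (n i)| <= M'.
Proof.
move=> _ mh _ M0 _.
pose Z := (4 * M + 16 * M ^+ 2) / 2.
pose bound := 4 * ((2 * m) ^ (2 * m + 2))%:R * Z * Xi3_weight R m.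
have bound_ge0 : 0 <= bound.
  by rewrite !mulr_ge0 ?Xi3_weight_ge0 //; nra.
exists (bound + 1); split; first lra.
move=> k dO O P mu X n n0 c n_ge mX lawX indX hM _ nc i.
have n0n : (n0 <= n i)%N.
  by rewrite -(ler_nat R); have [-> /andP[c1 _]] := nc i; rewrite ler_peMl.
have mn : (m <= n i)%N by have := n_ge i; lia.
apply: le_trans (Xi3_le (Z := Z) _ (n_ge i) n0n) _; last by rewrite lerDl.
move=> cc j jc ccm.
have indXi := mutually_independent_row (i := i) indX.
exact (abs_zeta3_le (mX i) (lawX i) indXi mh mn (hM i) jc ccm).
Qed.
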